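(* Let $c(t)$ be a solution of Hamilton's equations for the Kepler–Heisenberg Hamiltonian defined on an open interval $I$, and suppose $z(t) = 0$ for all $t\in I$. Then the projected curve $t\mapsto (x(t),y(t))$ is contained in a straight line through the origin of the $xy$-plane.
   Context: Phase space is $T^*\mathbb R^3$ with coordinates $(x,y,z,p_x,p_y,p_z)$. Set $P_X = p_x - \tfrac12 y p_z$, $P_Y = p_y + \tfrac12 x p_z$. The Kepler–Heisenberg Hamiltonian is $H = \tfrac12(P_X^2 + P_Y^2) - \frac{1}{8\pi\sqrt{(x^2+y^2)^2+16z^2}}$, defined away from $x=y=z=0$. *)

From Stdlib Require Import Reals.
From Coquelicot Require Import Coquelicot.
Open Scope R_scope.

Definition PX (x y px pz : R) : R := px - / 2 * y * pz.
Definition PY (x y py pz : R) : R := py + / 2 * x * pz.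

(* Kepler--Heisenberg Hamiltonian on T^*R^3 (coordinates x y z px py pz),
   meaningful away from x = y = z = 0. *)
Definition KH (x y z px py pz : R) : R :=
  / 2 * ((PX x y px pz) ^ 2 + (PY x y py pz) ^ 2)
  - / (8 * PI * sqrt ((x ^ 2 + y ^ 2) ^ 2 + 16 * z ^ 2)).

Definition in_open_interval (a b : Rbar) (t : R) : Prop :=
  Rbar_lt a (Finite t) /\ Rbar_lt (Finite t) b.

Definition KH_solution (a b : Rbar) (x y z px py pz : R -> R) : Prop :=
  forall t, in_open_interval a b t ->
    ~ (x t = 0 /\ y t = 0 /\ z t = 0) /\
    is_derive x t (Derive (fun u => KH (x t) (y t) (z t) u (py t) (pz t)) (px t)) /\
    is_derive y t (Derive (fun u => KH (x t) (y t) (z t) (px t) u (pz t)) (py t)) /\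
    is_derive z t (Derive (fun u => KH (x t) (y t) (z t) (px t) (py t) u) (pz t)) /\
    is_derive px t (- Derive (fun u => KH u (y t) (z t) (px t) (py t) (pz t)) (x t)) /\
    is_derive py t (- Derive (fun u => KH (x t) u (z t) (px t) (py t) (pz t)) (y t)) /\
    is_derive pz t (- Derive (fun u => KH (x t) (y t) u (px t) (py t) (pz t)) (z t)).

(* Hamilton's equation for z reads  z' = dKH/dp_z = (x P_Y - y P_X) / 2,
   while those for x and y read  x' = P_X,  y' = P_Y.  Hence along a
   solution with z identically 0 the planar angular momentum vanishes:
   x y' - y x' = 0.  The curve also avoids the origin of the xy-plane (the
   singular set of KH is x = y = z = 0), so its direction
   (x, y) / sqrt (x^2 + y^2) is well defined, and a vanishing angular
   momentum makes this unit vector stationary, hence constant on the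
   interval.  If (u, v) is that constant direction then v x - u y = 0 all
   along the curve, and (u, v) <> 0 as it has norm 1. *)

From Stdlib Require Import Reals Lra.
From Coquelicot Require Import Coquelicot.
Open Scope R_scope.

Lemma KH_derive_px X Y Z A B C :
  Derive (fun u => KH X Y Z u B C) A = PX X Y A C.
Proof. apply is_derive_unique; unfold KH, PX, PY; auto_derive; [easy | field]. Qed.

Lemma KH_derive_py X Y Z A B C :
  Derive (fun u => KH X Y Z A u C) B = PY X Y B C.
Proof. apply is_derive_unique; unfold KH, PX, PY; auto_derive; [easy | field]. Qed.

Lemma KH_derive_pz X Y Z A B C :
  Derive (fun u => KH X Y Z A B u) C = / 2 * (X * PY X Y B C - Y * PX X Y A C).
Proof. apply is_derive_unique; unfold KH, PX, PY; auto_derive; [easy | field]. Qed.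

Lemma sum_squares_pos u v : ~ (u = 0 /\ v = 0) -> 0 < u ^ 2 + v ^ 2.
Proof.
intros Huv.
destruct (Req_dec u 0) as [Hu | Hu].
- assert (0 < v ^ 2) by (apply pow2_gt_0; tauto); nra.
- assert (0 < u ^ 2) by (apply pow2_gt_0; exact Hu); nra.
Qed.

Lemma direction_component_stationary f g t f' g' :
  is_derive f t f' -> is_derive g t g' -> 0 < f t ^ 2 + g t ^ 2 ->
  f t * g' = g t * f' ->
  is_derive (fun s => f s / sqrt (f s ^ 2 + g s ^ 2)) t 0.
Proof.
intros Hf Hg Hpos Hmom.
assert (Ef : Derive f t = f') by (apply is_derive_unique; exact Hf).
assert (Eg : Derive g t = g') by (apply is_derive_unique; exact Hg).
assert (Hr : 0 < sqrt (f t ^ 2 + g t ^ 2)) by (apply sqrt_lt_R0; exact Hpos).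
assert (Hrr : sqrt (f t ^ 2 + g t ^ 2) * sqrt (f t ^ 2 + g t ^ 2) = f t ^ 2 + g t ^ 2)
  by (apply sqrt_sqrt; lra).
assert (Hsq : f t * (f t * 1) + g t * (g t * 1) = f t ^ 2 + g t ^ 2) by ring.
auto_derive; rewrite ?Hsq.
- repeat split; try (eexists; eassumption); lra.
- change (fun s => f s) with f; change (fun s => g s) with g; rewrite Ef, Eg.
  revert Hr Hrr; set (r := sqrt (f t ^ 2 + g t ^ 2)); intros Hr Hrr; rewrite Hrr.
  transitivity (g t * (g t * f' - f t * g') / (r * (f t ^ 2 + g t ^ 2))).
  + field; lra.
  + rewrite Hmom; field; lra.
Qed.

Lemma direction_stationary f g t f' g' :
  is_derive f t f' -> is_derive g t g' -> 0 < f t ^ 2 + g t ^ 2 ->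
  f t * g' = g t * f' ->
  is_derive (fun s => f s / sqrt (f s ^ 2 + g s ^ 2)) t 0 /\
  is_derive (fun s => g s / sqrt (f s ^ 2 + g s ^ 2)) t 0.
Proof.
intros Hf Hg Hpos Hmom; split.
- exact (direction_component_stationary f g t f' g' Hf Hg Hpos Hmom).
- apply is_derive_ext with (fun s => g s / sqrt (g s ^ 2 + f s ^ 2)).
  + intros s; now rewrite Rplus_comm.
  + apply (direction_component_stationary g f t g' f'); try easy; lra.
Qed.

Lemma direction_unit u v : 0 < u ^ 2 + v ^ 2 ->
  (u / sqrt (u ^ 2 + v ^ 2)) ^ 2 + (v / sqrt (u ^ 2 + v ^ 2)) ^ 2 = 1.
Proof.
intros Hpos.
assert (Hr : 0 < sqrt (u ^ 2 + v ^ 2)) by (apply sqrt_lt_R0; exact Hpos).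
replace ((u / sqrt (u ^ 2 + v ^ 2)) ^ 2 + (v / sqrt (u ^ 2 + v ^ 2)) ^ 2)
  with ((u ^ 2 + v ^ 2) / (sqrt (u ^ 2 + v ^ 2) ^ 2)) by (field; lra).
rewrite pow2_sqrt by lra; field; lra.
Qed.

Lemma in_open_interval_between a b t0 t s :
  in_open_interval a b t0 -> in_open_interval a b t ->
  Rmin t0 t <= s <= Rmax t0 t -> in_open_interval a b s.
Proof.
unfold in_open_interval, Rmin, Rmax; destruct (Rle_dec t0 t);
destruct a, b; simpl; intros; lra.
Qed.

Lemma derive_zero_of_vanishing a b f t :
  (forall s, in_open_interval a b s -> f s = 0) ->
  in_open_interval a b t -> is_derive f t 0.
Proof.
intros Hf [Ha Hb].
apply is_derive_ext_loc with (fun _ => 0).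
- apply (locally_interval _ t a b Ha Hb); intros s Hsa Hsb.
  symmetry; apply Hf; split; assumption.
- apply (is_derive_const (K := R_AbsRing) (V := R_NormedModule)).
Qed.

Lemma constant_of_derive_zero a b f t0 :
  in_open_interval a b t0 ->
  (forall t, in_open_interval a b t -> is_derive f t 0) ->
  forall t, in_open_interval a b t -> f t = f t0.
Proof.
intros Ht0 Hf t Ht.
assert (Hin : forall s, Rmin t0 t <= s <= Rmax t0 t -> is_derive f s 0)
  by (intros s Hs; apply Hf, (in_open_interval_between a b t0 t s Ht0 Ht Hs)).
destruct (MVT_gen f t0 t (fun _ => 0)) as (c & _ & Hc).
- intros s Hs; apply Hin; lra.
- intros s Hs; apply continuity_pt_filterlim.
  apply (ex_derive_continuous (K := R_AbsRing) (V := R_NormedModule)).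
  exists 0; apply Hin; exact Hs.
- lra.
Qed.

Lemma planar_solution_angular_momentum a b x y z px py pz t :
  KH_solution a b x y z px py pz ->
  (forall s, in_open_interval a b s -> z s = 0) ->
  in_open_interval a b t ->
  exists x' y', is_derive x t x' /\ is_derive y t y' /\
    0 < x t ^ 2 + y t ^ 2 /\ x t * y' = y t * x'.
Proof.
intros Hsol Hz Ht.
destruct (Hsol t Ht) as (Hreg & Hx & Hy & Hzd & _).
rewrite KH_derive_px in Hx; rewrite KH_derive_py in Hy; rewrite KH_derive_pz in Hzd.
exists (PX (x t) (y t) (px t) (pz t)), (PY (x t) (y t) (py t) (pz t)).
split; [exact Hx | split; [exact Hy | split]].
- apply sum_squares_pos; rewrite (Hz t Ht) in Hreg; tauto.
- assert (Hz' := derive_zero_of_vanishing a b z t Hz Ht).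
  apply is_derive_unique in Hzd; apply is_derive_unique in Hz'.
  rewrite Hz' in Hzd; lra.
Qed.

Theorem mainTheorem4 (a b : Rbar) (x y z px py pz : R -> R) :
  KH_solution a b x y z px py pz ->
  (forall t, in_open_interval a b t -> z t = 0) ->
  exists alpha beta : R, ~ (alpha = 0 /\ beta = 0) /\
    forall t, in_open_interval a b t -> alpha * x t + beta * y t = 0.
Proof.
intros Hsol Hz.
(* On an empty interval any line will do. *)
destruct (Classical_Prop.classic (exists t0, in_open_interval a b t0))
  as [[t0 Ht0] | Hempty].
2: { exists 1, 0; split; [lra | intros t Ht; exfalso; eauto]. }
set (r := fun s => sqrt (x s ^ 2 + y s ^ 2)).
set (U := fun s => x s / r s).
set (V := fun s => y s / r s).
assert (Hmotion : forall t, in_open_interval a b t ->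
  0 < x t ^ 2 + y t ^ 2 /\ is_derive U t 0 /\ is_derive V t 0).
{ intros t Ht.
  destruct (planar_solution_angular_momentum a b x y z px py pz t Hsol Hz Ht)
    as (x' & y' & Hx & Hy & Hpos & Hmom).
  split; [exact Hpos | exact (direction_stationary x y t x' y' Hx Hy Hpos Hmom)]. }
assert (HU := constant_of_derive_zero a b U t0 Ht0 (fun t Ht => proj1 (proj2 (Hmotion t Ht)))).
assert (HV := constant_of_derive_zero a b V t0 Ht0 (fun t Ht => proj2 (proj2 (Hmotion t Ht)))).
exists (V t0), (- U t0); split.
- intros [HV0 HU0].
  assert (Hunit := direction_unit (x t0) (y t0) (proj1 (Hmotion t0 Ht0))).
  fold (r t0) in Hunit; fold (U t0) (V t0) in Hunit; nra.
- intros t Ht; rewrite <- (HU t Ht), <- (HV t Ht).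
  assert (Hr : 0 < r t) by (apply sqrt_lt_R0, (proj1 (Hmotion t Ht))).
  unfold U, V; field; lra.
Qed.
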